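(* Let $K$ be a field, $A\subset K$ a finite set with $|A|=m$, $0\le p\le m$, and $X=\{x_1,\dots,x_r\}$ a set of indeterminates with $r\le m-p$. Let $B\subset K$ be any finite set with $|B|\ge p$. Then in $K[X]$, $$\sum_{A'\subset A,\ |A'|=p}\mathcal{R}(A\setminus A',B)\frac{\mathcal{R}(X,A')}{\mathcal{R}(A\setminus A',A')}=\sum_{B'\subset B,\ |B'|=p}\mathcal{R}(A,B\setminus B')\frac{\mathcal{R}(X,B')}{\mathcal{R}(B',B\setminus B')}.$$
   Context: For finite sets $Y,Z$ of elements or indeterminates, $\mathcal{R}(Y,Z):=\prod_{y\in Y,z\in Z}(y-z)$, with $\mathcal{R}(Y,Z)=1$ if $Y$ or $Z$ is empty (in particular when $r=0$). *)

From mathcomp Require Import all_boot all_algebra.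
From mathcomp Require Import finmap.
From mathcomp Require Import mpoly.
Set Implicit Arguments. Unset Strict Implicit. Unset Printing Implicit Defensive.
Import GRing.Theory.
Local Open Scope ring_scope.
Local Open Scope fset_scope.

Definition Rc (K : fieldType) (Y Z : {fset K}) : K :=
  \prod_(y <- Y) \prod_(z <- Z) (y - z).

Definition RX (K : fieldType) (r : nat) (Z : {fset K}) : {mpoly K[r]} :=
  \prod_(i < r) \prod_(z <- Z) ('X_i - z%:MP).

(* Replace R(X, S) by \prod_(s in S) F(s) for an arbitrary polynomial F of
   degree at most |A| - p, and induct on p.  A point c common to A and B
   factors out as F(c) from both sides and lowers p.  If A and B are disjoint,
   remove a point a from A: the difference of the two sides, multiplied by
   \prod_(y in A \ a) (a - y), is the value at a of a polynomial gap_poly of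
   size at most |A| - 1 + |B| - p.  It vanishes at the |A| - 1 + |B| points
   of A \ a (where its terms cancel in pairs) and of B (by induction), hence
   it is zero. *)

From mathcomp Require Import all_boot all_algebra.
From mathcomp Require Import finmap.
From mathcomp Require Import mpoly.
From mathcomp Require Import ring.
From mathcomp Require Import zify.
Set Implicit Arguments. Unset Strict Implicit. Unset Printing Implicit Defensive.
Import GRing.Theory.
Local Open Scope fset_scope.
Local Open Scope ring_scope.

Section FiniteSets.
Variables (T : choiceType) (V : nmodType).
Implicit Types (a : T) (A S : {fset T}).

Lemma fsetU1D_notin a A S : a \notin S -> (a |` A) `\` S = a |` (A `\` S).
Proof. by move=> aS; apply/fsetP => y; rewrite !inE; case: eqP => [->|]; rewrite ?aS. Qed.

Lemma fsetU1DU1 a A S : a \notin A -> (a |` A) `\` (a |` S) = A `\` S.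
Proof.
by move=> aA; apply/fsetP => y; rewrite !inE; case: eqP => [->|]; rewrite ?(negbTE aA) ?andbF.
Qed.

Lemma big_fpowersetU1 a A (P : pred {fset T}) (G : {fset T} -> V) : a \notin A ->
  \sum_(S <- fpowerset (a |` A) | P S) G S =
  \sum_(S <- fpowerset A | P S) G S + \sum_(S <- fpowerset A | P (a |` S)) G (a |` S).
Proof.
move=> aA; rewrite (big_fsetIDcond _ (fun S => a \notin S)); congr (_ + _).
  by apply: eq_fbigl_cond => S; rewrite !inE /= !fpowersetE -fsubsetD1 fsetU1K.
have U1_inj : {in fpowerset A &, injective (fun S => a |` S)}.
  move=> S1 S2; rewrite !fpowersetE => /fsubsetP S1A /fsubsetP S2A eqU1.
  rewrite -(fsetU1K (contra (S1A a) aA)) eqU1 fsetU1K //.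
  exact: contra (S2A a) aA.
rewrite [RHS]big_mkcond.
rewrite -(big_imfset _ imfset_key (fun S => if P S then G S else 0) U1_inj) /= -big_mkcond.
apply: eq_fbigl_cond => S; rewrite !inE /= negbK fpowersetE.
congr (_ && _); apply/andP/imfsetP => [[SaA aS] | [S' /= + ->]].
  by exists (S `\ a); rewrite ?fpowersetE ?fsubDset ?fsetD1K.
by rewrite fpowersetE fsetU11 => /fsetUS.
Qed.

Lemma big_fpowersetU1_card a A p (G : {fset T} -> V) : a \notin A ->
  \sum_(S <- fpowerset (a |` A) | #|`S| == p.+1) G S =
  \sum_(S <- fpowerset A | #|`S| == p.+1) G S +
  \sum_(S <- fpowerset A | #|`S| == p) G (a |` S).
Proof.
move=> aA; rewrite big_fpowersetU1 //; congr (_ + _).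
apply: eq_fbigl_cond => S; rewrite !inE /= fpowersetE.
have [/fsubsetP SA | //] := boolP (S `<=` A).
by rewrite cardfsU1 (contra (SA a) aA).
Qed.

Lemma big_fpowerset_card0 A (G : {fset T} -> V) :
  \sum_(S <- fpowerset A | #|`S| == 0%N) G S = G fset0.
Proof.
rewrite big_fset_condE (_ : [fset _ in _ | _] = [fset fset0]) ?big_seq_fset1 //.
apply/fsetP => S; rewrite !inE /= fpowersetE cardfs_eq0.
by have [->|] := eqVneq S fset0; rewrite ?fsub0set ?andbF.
Qed.

End FiniteSets.

Section Resultants.
Variable K : fieldType.
Implicit Types (a : K) (A B S Y Z : {fset K}).

Lemma prod_fsetDS (R : comPzSemiRingType) (g : K -> R) S Y : S `<=` Y ->
  \prod_(y <- Y) g y = \prod_(y <- Y `\` S) g y * \prod_(y <- S) g y.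
Proof.
move=> SY; rewrite (big_fsetID _ (mem S)) /= mulrC; congr (_ * _).
  by apply: eq_fbigl => y; rewrite !inE andbC.
apply: eq_fbigl => y; rewrite !inE; apply/andP/idP => [[] // | yS].
by split=> //; apply: (fsubsetP SY).
Qed.

Lemma prod_subC a Y :
  \prod_(y <- Y) (a - y) = (-1) ^+ #|`Y| * \prod_(y <- Y) (y - a).
Proof.
rewrite !big_seq_fsetE /=.
under eq_bigr do rewrite -opprB.
by rewrite (prodrN (mem predT)) cardfE cardT -cardE.
Qed.

Lemma prod_subl_eq0 a Y : (\prod_(y <- Y) (a - y) == 0) = (a \in Y).
Proof.
rewrite prodf_seq_eq0; apply/hasP/idP => [[y yY /= /eqP/subr0_eq->] //|aY].
by exists a; rewrite //= subrr.
Qed.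

Lemma prod_subr_eq0 a Y : (\prod_(y <- Y) (y - a) == 0) = (a \in Y).
Proof.
rewrite prodf_seq_eq0; apply/hasP/idP => [[y yY /= /eqP/subr0_eq<-] //|aY].
by exists a; rewrite //= subrr.
Qed.

Lemma Rc0l Z : Rc fset0 Z = 1.
Proof. by rewrite /Rc big_seq_fset0. Qed.

Lemma Rc0r Y : Rc Y fset0 = 1.
Proof. by rewrite /Rc big1 // => y _; rewrite big_seq_fset0. Qed.

Lemma RcU1l a Y Z : a \notin Y -> Rc (a |` Y) Z = \prod_(z <- Z) (a - z) * Rc Y Z.
Proof. by move=> aY; rewrite /Rc big_fsetU1. Qed.

Lemma RcU1r a Y Z : a \notin Z -> Rc Y (a |` Z) = \prod_(y <- Y) (y - a) * Rc Y Z.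
Proof.
by move=> aZ; rewrite /Rc -big_split; apply: eq_bigr => y _; rewrite big_fsetU1.
Qed.

Lemma Rc_eq0 Y Z : (Rc Y Z == 0) = (Y `&` Z != fset0).
Proof.
rewrite prodf_seq_eq0; apply/hasP/fset0Pn => [[y yY]|[y]].
  by rewrite /= prod_subl_eq0 => yZ; exists y; rewrite inE yY yZ.
by rewrite inE => /andP[yY yZ]; exists y; rewrite //= prod_subl_eq0.
Qed.

Lemma Rc_fsetDl_neq0 A S : Rc (A `\` S) S != 0.
Proof.
by rewrite Rc_eq0 negbK; apply/eqP/fsetP => y; rewrite !inE; case: (y \in S); rewrite ?andbF.
Qed.

Lemma Rc_fsetDr_neq0 B S : Rc S (B `\` S) != 0.
Proof.
by rewrite Rc_eq0 negbK; apply/eqP/fsetP => y; rewrite !inE; case: (y \in S); rewrite ?andbF.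
Qed.

Definition coefA A B S := Rc (A `\` S) B / Rc (A `\` S) S.
Definition coefB A B S := Rc A (B `\` S) / Rc S (B `\` S).

Lemma coefA0 A B : coefA A B fset0 = Rc A B.
Proof. by rewrite /coefA fsetD0 Rc0r divr1. Qed.

Lemma coefB0 A B : coefB A B fset0 = Rc A B.
Proof. by rewrite /coefB fsetD0 Rc0l divr1. Qed.

Section AddPoint.
Variables (a : K) (A B S : {fset K}).
Hypothesis aA : a \notin A.
Hypothesis SA : S `<=` A.

Let aS : a \notin S. Proof. exact: contra (fsubsetP SA a) aA. Qed.
Let aAS : a \notin A `\` S. Proof. by rewrite inE negb_and aA orbT. Qed.

Lemma coefA_U1A : \prod_(y <- A) (a - y) * coefA (a |` A) B S =
  \prod_(z <- B) (a - z) * \prod_(y <- A `\` S) (a - y) * coefA A B S.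
Proof.
have PS0 : \prod_(y <- S) (a - y) != 0 by rewrite prod_subl_eq0.
rewrite /coefA fsetU1D_notin // !RcU1l // (prod_fsetDS _ SA).
by field; rewrite PS0 Rc_fsetDl_neq0.
Qed.

Lemma coefA_U1AS : \prod_(y <- A) (a - y) * coefA (a |` A) B (a |` S) =
  (-1) ^+ #|`A `\` S| * \prod_(y <- S) (a - y) * coefA A B S.
Proof.
have PAS0 : \prod_(y <- A `\` S) (y - a) != 0 by rewrite prod_subr_eq0.
rewrite /coefA fsetU1DU1 // RcU1r // (prod_fsetDS _ SA) (prod_subC a (A `\` S)).
by set s := (-1) ^+ _; field; rewrite PAS0 Rc_fsetDl_neq0.
Qed.

Lemma coefA_U1_cancel :
  coefA (a |` A) B (a |` S) * (\prod_(z <- B) (a - z) * \prod_(y <- A `\` S) (a - y)) +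
  (-1) ^+ #|`(a |` A) `\` S| * coefA (a |` A) B S * \prod_(y <- S) (a - y) = 0.
Proof.
have PAS0 : \prod_(y <- A `\` S) (y - a) != 0 by rewrite prod_subr_eq0.
have PS0 : \prod_(y <- S) (a - y) != 0 by rewrite prod_subl_eq0.
rewrite /coefA fsetU1DU1 // fsetU1D_notin // RcU1r // !RcU1l // cardfsU1 aAS exprS.
rewrite (prod_subC a (A `\` S)).
by set s := (-1) ^+ _; field; rewrite PAS0 PS0 Rc_fsetDl_neq0.
Qed.

Lemma coefA_U1ABS : a \notin B -> coefA (a |` A) (a |` B) (a |` S) = coefA A B S.
Proof.
move=> aB; have PAS0 : \prod_(y <- A `\` S) (y - a) != 0 by rewrite prod_subr_eq0.
rewrite /coefA fsetU1DU1 // !RcU1r //.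
by field; rewrite PAS0 Rc_fsetDl_neq0.
Qed.

End AddPoint.

Lemma coefA_U1B b A B S : b \notin B ->
  coefA A (b |` B) S = \prod_(y <- A `\` S) (y - b) * coefA A B S.
Proof. by move=> bB; rewrite /coefA RcU1r // mulrA. Qed.

Lemma coefB_U1A a A B S : a \notin A ->
  coefB (a |` A) B S = \prod_(z <- B `\` S) (a - z) * coefB A B S.
Proof. by move=> aA; rewrite /coefB RcU1l // mulrA. Qed.

Lemma coefA_eq0 c A B S : c \in A -> c \in B -> c \notin S -> coefA A B S = 0.
Proof.
move=> cA cB cS; apply/eqP; rewrite mulf_eq0 Rc_eq0; apply/orP; left.
by apply/fset0Pn; exists c; rewrite !inE cA cB cS.
Qed.

Lemma coefB_eq0 c A B S : c \in A -> c \in B -> c \notin S -> coefB A B S = 0.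
Proof.
move=> cA cB cS; apply/eqP; rewrite mulf_eq0 Rc_eq0; apply/orP; left.
by apply/fset0Pn; exists c; rewrite !inE cA cB cS.
Qed.

Section AddPointB.
Variables (b : K) (A B S : {fset K}).
Hypothesis bB : b \notin B.
Hypothesis SB : S `<=` B.

Let bS : b \notin S. Proof. exact: contra (fsubsetP SB b) bB. Qed.
Let bBS : b \notin B `\` S. Proof. by rewrite inE negb_and bB orbT. Qed.

Lemma coefB_U1BS :
  \prod_(z <- B `\` S) (b - z) * coefB A (b |` B) (b |` S) = coefB A B S.
Proof.
have PBS0 : \prod_(z <- B `\` S) (b - z) != 0 by rewrite prod_subl_eq0.
rewrite /coefB fsetU1DU1 // RcU1l //.
by field; rewrite PBS0 Rc_fsetDr_neq0.
Qed.

Lemma coefB_U1ABS : b \notin A -> coefB (b |` A) (b |` B) (b |` S) = coefB A B S.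
Proof.
move=> bA; have PBS0 : \prod_(z <- B `\` S) (b - z) != 0 by rewrite prod_subl_eq0.
rewrite /coefB fsetU1DU1 // !RcU1l //.
by field; rewrite PBS0 Rc_fsetDr_neq0.
Qed.

End AddPointB.

End Resultants.

Section Interpolation.
Variables (K : fieldType) (L : idomainType) (phi : {rmorphism K -> L}) (F : {poly L}).
Implicit Types (a x : K) (A B S Z : {fset K}).

Definition prodF S : L := \prod_(s <- S) F.[phi s].

Definition sumA p A B : L :=
  \sum_(S <- fpowerset A | #|`S| == p) phi (coefA A B S) * prodF S.

Definition sumB p A B : L :=
  \sum_(S <- fpowerset B | #|`S| == p) phi (coefB A B S) * prodF S.

Lemma prodF_U1 a S : a \notin S -> prodF (a |` S) = F.[phi a] * prodF S.
Proof. by move=> aS; rewrite /prodF big_fsetU1. Qed.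

Lemma sumA0 A B : sumA 0 A B = phi (Rc A B).
Proof. by rewrite /sumA big_fpowerset_card0 coefA0 /prodF big_seq_fset0 mulr1. Qed.

Lemma sumB0 A B : sumB 0 A B = phi (Rc A B).
Proof. by rewrite /sumB big_fpowerset_card0 coefB0 /prodF big_seq_fset0 mulr1. Qed.

Lemma sumA_U1AB p c A B : c \notin A -> c \notin B ->
  sumA p.+1 (c |` A) (c |` B) = F.[phi c] * sumA p A B.
Proof.
move=> cA cB; rewrite /sumA big_fpowersetU1_card // big1_fset ?add0r; last first.
  move=> S; rewrite fpowersetE => /fsubsetP SA _.
  by rewrite (@coefA_eq0 _ c) ?fsetU11 ?(contra (SA c)) // rmorph0 mul0r.
rewrite mulr_sumr; apply: eq_fbigr => S; rewrite fpowersetE => SA _.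
by rewrite coefA_U1ABS // prodF_U1 ?(contra (fsubsetP SA c)) //; ring.
Qed.

Lemma sumB_U1AB p c A B : c \notin A -> c \notin B ->
  sumB p.+1 (c |` A) (c |` B) = F.[phi c] * sumB p A B.
Proof.
move=> cA cB; rewrite /sumB big_fpowersetU1_card // big1_fset ?add0r; last first.
  move=> S; rewrite fpowersetE => /fsubsetP SB _.
  by rewrite (@coefB_eq0 _ c) ?fsetU11 ?(contra (SB c)) // rmorph0 mul0r.
rewrite mulr_sumr; apply: eq_fbigr => S; rewrite fpowersetE => SB _.
by rewrite coefB_U1ABS // prodF_U1 ?(contra (fsubsetP SB c)) //; ring.
Qed.

Definition nodal Z : {poly L} := \prod_(z <- Z) ('X - (phi z)%:P).

Lemma horner_nodal Z x : (nodal Z).[phi x] = phi (\prod_(z <- Z) (x - z)).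
Proof.
rewrite /nodal horner_prod rmorph_prod; apply: eq_bigr => z _.
by rewrite hornerXsubC rmorphB.
Qed.

Lemma size_nodal Z : size (nodal Z) = #|`Z|.+1.
Proof. by rewrite /nodal size_prod_XsubC. Qed.

Lemma horner_nodal_mem x Z : x \in Z -> (nodal Z).[phi x] = 0.
Proof. by move=> xZ; apply/eqP; rewrite horner_nodal fmorph_eq0 prod_subl_eq0. Qed.

Definition gap_poly p A B : {poly L} :=
  \sum_(S <- fpowerset A | #|`S| == p.+1)
      (phi (coefA A B S) * prodF S) *: (nodal B * nodal (A `\` S))
  + \sum_(S <- fpowerset A | #|`S| == p)
      (phi ((-1) ^+ #|`A `\` S| * coefA A B S) * prodF S) *: (nodal S * F)
  - \sum_(S <- fpowerset B | #|`S| == p.+1)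
      (phi (coefB A B S) * prodF S) *: (nodal (B `\` S) * nodal A).

Lemma size_gap_poly p A B : (p < #|`B|)%N -> (size F <= (#|`A| - p).+1)%N ->
  (size (gap_poly p A B) <= #|`A| + #|`B| - p)%N.
Proof.
move=> pB sF.
have size_term c (P Q : {poly L}) : (size P + size Q <= (#|`A| + #|`B| - p).+1)%N ->
    (size (c *: (P * Q)) <= #|`A| + #|`B| - p)%N.
  move=> sPQ; apply: leq_trans (size_scale_leq _ _) _.
  by apply: leq_trans (size_polyMleq _ _) _; rewrite -subn1 leq_subLR add1n.
rewrite /gap_poly; apply: leq_trans (size_polyD _ _) _; rewrite size_polyN geq_max.
apply/andP; split; first (apply: leq_trans (size_polyD _ _) _; rewrite geq_max; apply/andP; split).
all: apply/(leq_trans (size_sum _ _ _))/bigmax_leqP_seq => S;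
  rewrite fpowersetE => SX /eqP cS; apply: size_term;
  rewrite !size_nodal ?(cardfsDS SX) cS; have := fsubset_leq_card SX; rewrite cS; lia.
Qed.

Lemma horner_gap_U1 p a A B : a \notin A ->
  (gap_poly p A B).[phi a] =
  phi (\prod_(y <- A) (a - y)) * (sumA p.+1 (a |` A) B - sumB p.+1 (a |` A) B).
Proof.
move=> aA; rewrite /gap_poly !(hornerD, hornerN, horner_sum) /sumA /sumB.
rewrite big_fpowersetU1_card // mulrBr mulrDr !mulr_sumr.
congr (_ + _ - _); apply: eq_fbigr => S; rewrite fpowersetE => SX _;
  rewrite hornerZ hornerM !horner_nodal.
- by rewrite [RHS]mulrA -!rmorphM coefA_U1A // !rmorphM; ring.
- rewrite prodF_U1 ?(contra (fsubsetP SX a)) // [RHS]mulrA -!rmorphM coefA_U1AS //.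
  by rewrite !rmorphM; ring.
- by rewrite coefB_U1A // !rmorphM; ring.
Qed.

Lemma horner_gap_U1A p c A B : c \notin A -> (gap_poly p (c |` A) B).[phi c] = 0.
Proof.
move=> cA; rewrite /gap_poly !(hornerD, hornerN, horner_sum).
rewrite [X in _ - X]big1_fset ?subr0; last first.
  by move=> S _ _; rewrite hornerZ hornerM (horner_nodal_mem (fsetU11 _ _)) !mulr0.
rewrite big_fpowersetU1_card // big1_fset ?add0r; last first.
  move=> S; rewrite fpowersetE => /fsubsetP SA _.
  have cAS : c \in (c |` A) `\` S by rewrite !inE eqxx (contra (SA c) cA).
  by rewrite hornerZ hornerM (horner_nodal_mem cAS) !mulr0.
rewrite big_fpowersetU1 // [X in _ + (_ + X)]big1_fset ?addr0; last first.
  by move=> S _ _; rewrite hornerZ hornerM (horner_nodal_mem (fsetU11 _ _)) mul0r mulr0.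
rewrite -big_split /=; apply: big1_fset => S; rewrite fpowersetE => SA _.
rewrite !hornerZ !hornerM !horner_nodal fsetU1DU1 // prodF_U1 ?(contra (fsubsetP SA c)) //.
rewrite -[RHS](mulr0 (F.[phi c] * prodF S)) -(rmorph0 phi) -(coefA_U1_cancel B cA SA).
by set s := (-1) ^+ _; rewrite rmorphD !rmorphM; ring.
Qed.

Lemma horner_gap_U1B p b A B : b \notin B ->
  (gap_poly p A (b |` B)).[phi b] =
  phi (\prod_(y <- A) (b - y)) * F.[phi b] * (sumA p A B - sumB p A B).
Proof.
move=> bB; rewrite /gap_poly !(hornerD, hornerN, horner_sum).
rewrite [X in X + _ - _]big1_fset ?add0r; last first.
  by move=> S _ _; rewrite hornerZ hornerM (horner_nodal_mem (fsetU11 _ _)) mul0r mulr0.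
rewrite big_fpowersetU1_card // [X in _ - (X + _)]big1_fset ?add0r; last first.
  move=> S; rewrite fpowersetE => /fsubsetP SB _.
  have bBS : b \in (b |` B) `\` S by rewrite !inE eqxx (contra (SB b) bB).
  by rewrite hornerZ hornerM (horner_nodal_mem bBS) mul0r mulr0.
rewrite /sumA /sumB mulrBr !mulr_sumr; congr (_ - _); apply: eq_fbigr => S;
  rewrite fpowersetE => SX _; rewrite hornerZ hornerM !horner_nodal.
- rewrite coefA_U1B // (prod_fsetDS _ SX) (prod_subC b (A `\` S)) !rmorphM.
  by set s := phi _; ring.
- rewrite fsetU1DU1 // prodF_U1 ?(contra (fsubsetP SX b)) // -(coefB_U1BS A bB SX).
  by rewrite !rmorphM; ring.
Qed.

Lemma gap_poly_eq0 p A B : A `&` B = fset0 -> (p < #|`B|)%N ->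
  (size F <= (#|`A| - p).+1)%N ->
  (forall b, b \in B -> sumA p A (B `\ b) = sumB p A (B `\ b)) ->
  gap_poly p A B = 0.
Proof.
move=> AB0 pB sF sumAB; apply: (@roots_geq_poly_eq0 _ _ [seq phi x | x <- A `|` B]).
- apply/allP => _ /mapP[x + ->]; rewrite /root inE => /orP[xA | xB].
    by rewrite -(fsetD1K xA) horner_gap_U1A ?fsetD11.
  by rewrite -(fsetD1K xB) horner_gap_U1B ?fsetD11 // sumAB ?subrr ?mulr0.
- by rewrite (map_inj_uniq (fmorph_inj phi)) fset_uniq.
- rewrite size_map; apply: leq_trans (size_gap_poly pB sF) _.
  by rewrite -/(#|`A `|` B|) cardfsU AB0 cardfs0 subn0 leq_subr.
Qed.

Lemma sumA_eq_sumB p A B : (p <= #|`A|)%N -> (p <= #|`B|)%N ->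
  (size F <= (#|`A| - p).+1)%N -> sumA p A B = sumB p A B.
Proof.
elim: p A B => [|p IHp] A B pA pB sF; first by rewrite sumA0 sumB0.
have [AB0 | /fset0Pn[c]] := eqVneq (A `&` B) fset0; last first.
  rewrite inE => /andP[cA cB].
  have := cardfsD1 c A; have := cardfsD1 c B; rewrite cA cB => cardB cardA.
  rewrite -(fsetD1K cA) -(fsetD1K cB) sumA_U1AB ?sumB_U1AB ?fsetD11 // IHp //; lia.
have [a aA] : exists a, a \in A by apply/fset0Pn; rewrite -cardfs_gt0; lia.
have aA0 : a \notin A `\ a by rewrite fsetD11.
have cardA := cardfsD1 a A; rewrite aA in cardA.
have AB0' : (A `\ a) `&` B = fset0.
  by apply/eqP; rewrite -fsubset0 -AB0 fsetSI // fsubD1set.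
have sumAB b : b \in B -> sumA p (A `\ a) (B `\ b) = sumB p (A `\ a) (B `\ b).
  by move=> bB; have := cardfsD1 b B; rewrite bB => cardB; apply: IHp; lia.
have gap0 : gap_poly p (A `\ a) B = 0 by apply: gap_poly_eq0 AB0' _ _ sumAB; lia.
have := horner_gap_U1 p B aA0; rewrite fsetD1K // gap0 horner0 => /esym/eqP.
by rewrite mulf_eq0 fmorph_eq0 prod_subl_eq0 (negbTE aA0) subr_eq0 => /eqP.
Qed.

End Interpolation.

Section Indeterminates.
Variables (K : fieldType) (r : nat).

Definition RX_poly : {poly {mpoly K[r]}} := \prod_(i < r) (('X_i)%:P - 'X).

Lemma size_RX_poly : size RX_poly = r.+1.
Proof.
rewrite /RX_poly size_prod; last first.
  by move=> i _; rewrite -opprB oppr_eq0 -size_poly_eq0 size_XsubC.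
under eq_bigr do rewrite -opprB size_polyN size_XsubC.
by rewrite sum_nat_const card_ord muln2 -addnn -addnS addKn.
Qed.

Lemma prodF_RX_poly S : prodF (@mpolyC r K) RX_poly S = RX r S.
Proof.
rewrite /prodF /RX exchange_big /=; apply: eq_bigr => s _.
rewrite horner_prod; apply: eq_bigr => i _.
by rewrite hornerD hornerN hornerC hornerX.
Qed.

End Indeterminates.

Theorem corollary3p2 (K : fieldType) (A B : {fset K}) (m p r : nat) :
  #|` A| = m -> (p <= m)%N -> (r <= m - p)%N -> (p <= #|` B|)%N ->
  \sum_(A' <- fpowerset A | #|` A'| == p)
      (Rc (A `\` A') B / Rc (A `\` A') A') *: RX r A'
  = \sum_(B' <- fpowerset B | #|` B'| == p)
      (Rc A (B `\` B') / Rc B' (B `\` B')) *: RX r B'.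
Proof.
move=> <- pA rA pB.
have sizeF : (size (RX_poly K r) <= (#|`A| - p).+1)%N by rewrite size_RX_poly ltnS.
under eq_bigr do rewrite -prodF_RX_poly -mul_mpolyC.
under [in RHS]eq_bigr do rewrite -prodF_RX_poly -mul_mpolyC.
exact: (sumA_eq_sumB (@mpolyC r K) pA pB sizeF).
Qed.
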